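(* Let $n\ge 2$ and $1\le k\le n-1$. Let $L\in\mathbb{R}^{n\times n}$ be the Laplacian matrix of an undirected weighted graph on $n$ nodes, with eigenvalues $\lambda_1(L)\le\lambda_2(L)\le\cdots\le\lambda_n(L)$ and an associated orthonormal family of real eigenvectors $v_1(L),\dots,v_n(L)$. Let $g_1(s),\dots,g_n(s)$ and $f(s)$ be scalar transfer functions, $G(s)=\mathrm{diag}\{g_i(s)\}_{i=1}^n$, and define $$T_{yu}(s)=(I_n+G(s)f(s)L)^{-1}G(s),\qquad T_k(s)=V_k\big(V_k^TG^{-1}(s)V_k+f(s)\Lambda_k\big)^{-1}V_k^T,$$ where $V_k=[v_1(L)\ \cdots\ v_k(L)]$ and $\Lambda_k=\mathrm{diag}\{\lambda_i(L)\}_{i=1}^k$. Let $s_0\in\mathbb{C}$ be a point that is not a pole of $f(s)$ and such that the two quantities $$M_1:=\|T_k(s_0)\|,\qquad M_2:=\max_{1\le i\le n}|g_i^{-1}(s_0)|$$ are finite. Then whenever $|f(s_0)|\,\lambda_{k+1}(L)>M_2+M_1M_2^2$, the following inequality holds: $$\|T_{yu}(s_0)-T_k(s_0)\|\le\frac{(M_1M_2+1)^2}{|f(s_0)|\,\lambda_{k+1}(L)-M_2-M_1M_2^2}.$$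
   Context: $\|\cdot\|$ denotes the spectral norm of a matrix. $T_{yu}(s)$ is the transfer matrix from input $u$ to output $y$ of the feedback interconnection of the nodal dynamics $G(s)$ with the network coupling $f(s)L$ (negative feedback). $\lambda_i(L)$ denotes the $i$-th smallest eigenvalue of $L$. *)

From mathcomp Require Import all_boot all_order all_algebra.
From mathcomp Require Import classical_sets reals.
From mathcomp Require Export complex.
Set Implicit Arguments. Unset Strict Implicit. Unset Printing Implicit Defensive.
Import Order.TTheory GRing.Theory Num.Theory.
Local Open Scope ring_scope.

Definition cabs (R : realType) (z : R[i]) : R := ComplexField.Normc.normc z.

Definition cvnorm (R : realType) (n : nat) (x : 'cV[R[i]]_n) : R :=
  Num.sqrt (\sum_(i < n) (cabs (x i 0)) ^+ 2).

Definition specnorm (R : realType) (m n : nat) (A : 'M[R[i]]_(m, n)) : R :=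
  sup [set cvnorm (A *m x) | x in [set x : 'cV[R[i]]_n | cvnorm x = 1]].

Definition toCmx (R : realType) (m n : nat) (A : 'M[R]_(m, n)) : 'M[R[i]]_(m, n) :=
  map_mx (fun r => (r%:C)%C) A.

Definition is_graph_laplacian (R : realType) (n : nat) (L : 'M[R]_n) : Prop :=
  exists W : 'M[R]_n,
    [/\ W^T = W, (forall i j, 0 <= W i j), (forall i, W i i = 0) &
        L = \matrix_(i, j) ((i == j)%:R * (\sum_(l < n) W i l) - W i j)].

(* lam is the nondecreasing list of eigenvalues of L, and the columns of the
   orthogonal matrix V form an associated orthonormal family of eigenvectors
   (column i of V is v_{i+1}(L), lam i is lambda_{i+1}(L); 0-based). *)
Definition ordered_eigendecomp (R : realType) (n : nat) (L : 'M[R]_n)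
    (lam : 'I_n -> R) (V : 'M[R]_n) : Prop :=
  [/\ (forall i j : 'I_n, (i <= j)%N -> lam i <= lam j),
      V^T *m V = 1%:M &
      (forall i : 'I_n, L *m col i V = lam i *: col i V)].

Definition firstcols (R : Type) (n k : nat) (hk : (k <= n)%N) (V : 'M[R]_n)
  : 'M[R]_(n, k) := \matrix_(i, j) V i (widen_ord hk j).

From mathcomp Require Import all_boot all_order all_algebra.
From mathcomp Require Import boolp classical_sets reals complex.
From mathcomp Require Import ring lra.
Set Implicit Arguments. Unset Strict Implicit. Unset Printing Implicit Defensive.
Import Order.TTheory GRing.Theory Num.Theory.
Local Open Scope ring_scope.
Local Open Scope complex_scope.

(* Write N = G^-1 + f L, so that T_yu = N^-1, and P = I - V_k V_k^T.  If
   V_k^T N e = 0, the head V_k^T e of e equals -A_k^-1 V_k^T G^-1 P e, where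
   A_k = V_k^T G^-1 V_k + f Lambda_k; hence |e| <= (M1 M2 + 1) |P e|.  On the
   range of P the Laplacian is bounded below by lambda_{k+1}, and since
   P N e = P G^-1 e + f L P e this gives
   (|f| lambda_{k+1} - M2 - M1 M2^2) |P e| <= |P N e|.  The resulting lower
   bound on N makes it invertible, and for e = T_yu y - T_k y one has
   V_k^T N e = 0 and |P N e| <= (1 + M1 M2) |y|, which is the estimate. *)

Section EuclideanNorm.
Variable R : realType.
Local Notation C := R[i].

Lemma cabs_ge0 (z : C) : 0 <= cabs z.
Proof. by case: z => a b; apply: sqrtr_ge0. Qed.

Lemma cabs0 : cabs (0 : C) = 0.
Proof. exact: ComplexField.Normc.normc0. Qed.

Lemma cabs1 : cabs (1 : C) = 1.
Proof. exact: ComplexField.Normc.normc1. Qed.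

Lemma cabs_eq0 (z : C) : cabs z = 0 -> z = 0.
Proof. exact: ComplexField.Normc.eq0_normc. Qed.

Lemma cabsM (x y : C) : cabs (x * y) = cabs x * cabs y.
Proof. exact: ComplexField.Normc.normcM. Qed.

Lemma cabsD (x y : C) : cabs (x + y) <= cabs x + cabs y.
Proof. exact: le_normcD. Qed.

Lemma cabsN (x : C) : cabs (- x) = cabs x.
Proof. exact: normcN. Qed.

Lemma cabs_real (r : R) : cabs r%:C = `|r|.
Proof. by rewrite /cabs /= expr0n /= addr0 sqrtr_sqr. Qed.

Lemma cabs_sum (I : finType) (F : I -> C) : cabs (\sum_i F i) <= \sum_i cabs (F i).
Proof.
elim/big_ind2: _ => [|x1 x2 y1 y2 le1 le2|//]; first by rewrite cabs0.
exact: le_trans (cabsD _ _) (lerD le1 le2).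
Qed.

Lemma conjc_mul_cabs (z : C) : z^* * z = (cabs z ^+ 2)%:C.
Proof.
case: z => a b; rewrite /cabs /= sqr_sqrtr ?addr_ge0 ?sqr_ge0 //.
by congr Complex; ring.
Qed.

Lemma lagrange_identity n (a b : 'I_n -> R) :
  \sum_i \sum_j (a i * b j - a j * b i) ^+ 2 =
  2 * ((\sum_i a i ^+ 2) * (\sum_i b i ^+ 2)) - 2 * (\sum_i a i * b i) ^+ 2.
Proof.
have expand i j : (a i * b j - a j * b i) ^+ 2 =
    a i ^+ 2 * b j ^+ 2 + b i ^+ 2 * a j ^+ 2 - 2 * ((a i * b i) * (a j * b j)).
  by ring.
under eq_bigr => i _ do under eq_bigr => j _ do rewrite expand.
under eq_bigr => i _ do rewrite sumrB big_split /= -!mulr_sumr.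
rewrite sumrB big_split /= -!mulr_suml -mulr_sumr -mulr_suml.
by rewrite [(\sum_i b i ^+ 2) * _]mulrC; ring.
Qed.

Lemma cauchy_schwarz_real n (a b : 'I_n -> R) :
  \sum_i a i * b i <= Num.sqrt (\sum_i a i ^+ 2) * Num.sqrt (\sum_i b i ^+ 2).
Proof.
have sumsq_ge0 (c : 'I_n -> R) : 0 <= \sum_i c i ^+ 2.
  by rewrite sumr_ge0 // => i _; rewrite sqr_ge0.
have lagrange_ge0 : 0 <= \sum_i \sum_j (a i * b j - a j * b i) ^+ 2.
  by rewrite sumr_ge0 // => i _; apply: sumsq_ge0.
rewrite -sqrtrM ?sumsq_ge0 //; apply: le_trans (ler_norm _) _.
rewrite -sqrtr_sqr ler_sqrt ?mulr_ge0 ?sumsq_ge0 //.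
move: lagrange_ge0; rewrite lagrange_identity; lra.
Qed.

Implicit Types (m n p : nat).

Lemma cvnorm_ge0 n (x : 'cV[C]_n) : 0 <= cvnorm x.
Proof. exact: sqrtr_ge0. Qed.

Lemma cvnorm_sqr n (x : 'cV[C]_n) : cvnorm x ^+ 2 = \sum_i cabs (x i 0) ^+ 2.
Proof. by rewrite sqr_sqrtr // sumr_ge0 // => i _; rewrite sqr_ge0. Qed.

Lemma cvnorm_le n (x y : 'cV[C]_n) :
  (forall i, cabs (x i 0) <= cabs (y i 0)) -> cvnorm x <= cvnorm y.
Proof.
move=> le_xy; rewrite ler_sqrt; last by rewrite sumr_ge0 // => i _; rewrite sqr_ge0.
by apply: ler_sum => i _; rewrite ler_pXn2r ?nnegrE ?cabs_ge0.
Qed.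

Lemma cvnormZ n (c : C) (x : 'cV[C]_n) : cvnorm (c *: x) = cabs c * cvnorm x.
Proof.
rewrite /cvnorm; under eq_bigr => i _ do rewrite mxE cabsM exprMn.
by rewrite -mulr_sumr sqrtrM ?sqr_ge0 // sqrtr_sqr ger0_norm ?cabs_ge0.
Qed.

Lemma cvnorm0 n : cvnorm (0 : 'cV[C]_n) = 0.
Proof. by rewrite -(scale0r (0 : 'cV[C]_n)) cvnormZ cabs0 mul0r. Qed.

Lemma cvnormN n (x : 'cV[C]_n) : cvnorm (- x) = cvnorm x.
Proof.
by rewrite -scaleN1r cvnormZ cabsN cabs1 mul1r.
Qed.

Lemma cvnorm_eq0 n (x : 'cV[C]_n) : cvnorm x = 0 -> x = 0.
Proof.
move=> /eqP; rewrite sqrtr_eq0 => le_sum0.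
have sum0 : \sum_i cabs (x i 0) ^+ 2 = 0.
  by apply/eqP; rewrite eq_le le_sum0 sumr_ge0 // => i _; rewrite sqr_ge0.
apply/matrixP => i j; rewrite ord1 mxE.
move/psumr_eq0P: sum0 => /(_ (fun i _ => sqr_ge0 _) i isT) /eqP.
by rewrite expf_eq0 /= => /eqP /cabs_eq0.
Qed.

Lemma cvnormD n (x y : 'cV[C]_n) : cvnorm (x + y) <= cvnorm x + cvnorm y.
Proof.
pose a i := cabs (x i 0); pose b i := cabs (y i 0).
have le_ab : cvnorm (x + y) <= Num.sqrt (\sum_i (a i + b i) ^+ 2).
  rewrite ler_sqrt; last by rewrite sumr_ge0 // => i _; rewrite sqr_ge0.
  apply: ler_sum => i _; rewrite mxE ler_pXn2r ?nnegrE ?addr_ge0 ?cabs_ge0 //.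
  exact: cabsD.
apply: le_trans le_ab _.
have sum_ab : \sum_i (a i + b i) ^+ 2 =
    cvnorm x ^+ 2 + cvnorm y ^+ 2 + 2 * \sum_i a i * b i.
  rewrite !cvnorm_sqr mulr_sumr -!big_split /=; by apply: eq_bigr => i _; rewrite /a /b; ring.
have := cauchy_schwarz_real a b; rewrite -/(cvnorm x) -/(cvnorm y) => cs.
have := cvnorm_ge0 x; have := cvnorm_ge0 y => y_ge0 x_ge0.
rewrite -[cvnorm x + cvnorm y]ger0_norm ?addr_ge0 // -sqrtr_sqr.
rewrite ler_sqrt ?sqr_ge0 // sum_ab; nra.
Qed.

Lemma cvnormB n (x y : 'cV[C]_n) : cvnorm (x - y) <= cvnorm x + cvnorm y.
Proof. by rewrite -(cvnormN y); exact: cvnormD. Qed.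

Lemma cvnorm_normalize n (x : 'cV[C]_n) : x != 0 ->
  cvnorm ((cvnorm x)^-1%:C *: x) = 1.
Proof.
move=> x_neq0; have : cvnorm x != 0 by apply: contra x_neq0 => /eqP /cvnorm_eq0 ->.
by move=> ?; rewrite cvnormZ cabs_real ger0_norm ?invr_ge0 ?cvnorm_ge0 ?mulVf.
Qed.


Definition hdot n (x y : 'cV[C]_n) : 'M[C]_1 := (map_mx conjc x)^T *m y.

Lemma hdot_self n (x : 'cV[C]_n) : hdot x x 0 0 = (cvnorm x ^+ 2)%:C.
Proof.
rewrite cvnorm_sqr rmorph_sum !mxE; apply: eq_bigr => i _.
by rewrite !mxE conjc_mul_cabs.
Qed.

Lemma hdot_orth_cvnormD n (x y : 'cV[C]_n) : hdot x y = 0 -> hdot y x = 0 ->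
  cvnorm (x + y) ^+ 2 = cvnorm x ^+ 2 + cvnorm y ^+ 2.
Proof.
move=> xy0 yx0; apply: (@complexI R); rewrite rmorphD /= -!hdot_self.
rewrite /hdot map_mxD (raddfD (@trmx C n 1)) mulmxDl !mulmxDr.
by rewrite -/(hdot x y) -/(hdot y x) xy0 yx0 !mxE addr0 add0r.
Qed.

Lemma toCmx_tr m p (M : 'M[R]_(m, p)) : (toCmx M)^T = toCmx M^T.
Proof. exact: map_trmx. Qed.

Lemma toCmxM m p q (A : 'M[R]_(m, p)) (B : 'M[R]_(p, q)) :
  toCmx (A *m B) = toCmx A *m toCmx B.
Proof. exact: map_mxM. Qed.

Lemma toCmx1 n : toCmx (1%:M : 'M[R]_n) = 1%:M.
Proof. exact: map_mx1. Qed.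

Lemma hdot_toCmxl m p (M : 'M[R]_(m, p)) x y :
  hdot (toCmx M *m x) y = hdot x ((toCmx M)^T *m y).
Proof.
have conj_real : map_mx conjc (toCmx M) = toCmx M.
  by apply/matrixP => i j; rewrite !mxE conjc_real.
by rewrite /hdot map_mxM conj_real trmx_mul !mulmxA.
Qed.

Lemma hdot_toCmxr m p (M : 'M[R]_(m, p)) x y :
  hdot x (toCmx M *m y) = hdot ((toCmx M)^T *m x) y.
Proof. by rewrite toCmx_tr hdot_toCmxl -toCmx_tr trmxK. Qed.

Lemma hdot0l n (y : 'cV[C]_n) : hdot 0 y = 0.
Proof. by rewrite /hdot map_mx0 trmx0 mul0mx. Qed.

Lemma hdot0r n (x : 'cV[C]_n) : hdot x 0 = 0.
Proof. exact: mulmx0. Qed.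

Section Isometry.
Variables (m p : nat) (U : 'M[R]_(m, p)).
Hypothesis U_isometry : U^T *m U = 1%:M.
Local Notation Uc := (toCmx U).

Lemma toCmx_isometry : Uc^T *m Uc = 1%:M.
Proof. by rewrite toCmx_tr -toCmxM U_isometry toCmx1. Qed.

Lemma cvnorm_isometry x : cvnorm (Uc *m x) = cvnorm x.
Proof.
apply/eqP; rewrite -(@eqrXn2 _ 2) ?cvnorm_ge0 //; apply/eqP/(@complexI R).
by rewrite -!hdot_self hdot_toCmxl mulmxA toCmx_isometry mul1mx.
Qed.

Lemma isometry_proj_complE (v : 'cV[C]_m) :
  Uc^T *m ((1%:M - Uc *m Uc^T) *m v) = 0.
Proof.
by rewrite mulmxA mulmxBr mulmx1 mulmxA toCmx_isometry mul1mx subrr mul0mx.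
Qed.

Lemma cvnorm_isometry_split (v : 'cV[C]_m) :
  cvnorm v ^+ 2 = cvnorm (Uc^T *m v) ^+ 2 + cvnorm ((1%:M - Uc *m Uc^T) *m v) ^+ 2.
Proof.
have split_v : v = Uc *m (Uc^T *m v) + (1%:M - Uc *m Uc^T) *m v.
  by rewrite mulmxBl mul1mx mulmxA addrC subrK.
rewrite {1}split_v hdot_orth_cvnormD ?cvnorm_isometry //.
  by rewrite hdot_toCmxl isometry_proj_complE hdot0r.
by rewrite hdot_toCmxr isometry_proj_complE hdot0l.
Qed.

Lemma cvnorm_proj_le (v : 'cV[C]_m) : cvnorm (Uc^T *m v) <= cvnorm v.
Proof.
rewrite -(ler_pXn2r (n := 2)) ?nnegrE ?cvnorm_ge0 //.
by rewrite [leRHS]cvnorm_isometry_split lerDl sqr_ge0.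
Qed.

Lemma cvnorm_proj_compl_le (v : 'cV[C]_m) :
  cvnorm ((1%:M - Uc *m Uc^T) *m v) <= cvnorm v.
Proof.
rewrite -(ler_pXn2r (n := 2)) ?nnegrE ?cvnorm_ge0 //.
by rewrite [leRHS]cvnorm_isometry_split lerDr sqr_ge0.
Qed.

End Isometry.

End EuclideanNorm.

Section SpectralNorm.
Variable R : realType.
Local Notation C := R[i].
Implicit Types (m p : nat).

Lemma cabs_le1_cvnorm1 p (x : 'cV[C]_p) i : cvnorm x = 1 -> cabs (x i 0) <= 1.
Proof.
move=> x1; rewrite -(ler_pXn2r (n := 2)) ?nnegrE ?cabs_ge0 // expr1n.
rewrite -(expr1n _ 2) -x1 cvnorm_sqr (bigD1 i) //= lerDl.
by rewrite sumr_ge0 // => j _; rewrite sqr_ge0.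
Qed.

Lemma specnorm_has_ubound m p (A : 'M[C]_(m, p)) :
  has_ubound [set cvnorm (A *m x) | x in [set x : 'cV[C]_p | cvnorm x = 1]].
Proof.
exists (cvnorm (\col_i (\sum_j cabs (A i j))%:C)) => _ [x x1 <-].
apply: cvnorm_le => i; rewrite !mxE cabs_real ger0_norm; last first.
  by rewrite sumr_ge0 // => j _; exact: cabs_ge0.
apply: le_trans (cabs_sum _) _; apply: ler_sum => j _.
by rewrite cabsM ler_piMr ?cabs_ge0 ?cabs_le1_cvnorm1.
Qed.

Lemma cvnorm_mulmx_le m p (A : 'M[C]_(m, p)) (x : 'cV[C]_p) :
  cvnorm (A *m x) <= specnorm A * cvnorm x.
Proof.
have [->|x_neq0] := eqVneq x 0; first by rewrite mulmx0 !cvnorm0 mulr0.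
have x_gt0 : 0 < cvnorm x.
  by rewrite lt_def cvnorm_ge0 andbT; apply: contra x_neq0 => /eqP /cvnorm_eq0 ->.
have := ub_le_sup (specnorm_has_ubound A) (ex_intro2 _ _ _ (cvnorm_normalize x_neq0) erefl).
rewrite -scalemxAr cvnormZ cabs_real ger0_norm ?invr_ge0 ?cvnorm_ge0 //.
by rewrite mulrC -ler_pdivrMr.
Qed.

Lemma specnorm_ge0 m p (A : 'M[C]_(m, p)) : 0 <= specnorm A.
Proof.
case: (pselect ([set cvnorm (A *m x) | x in [set x | cvnorm x = 1]] !=set0)%classic).
  move=> [_ [x x1 _]]; apply: le_trans (cvnorm_ge0 (A *m x)) _.
  exact: (ub_le_sup (specnorm_has_ubound A) (ex_intro2 _ _ x x1 erefl)).
by rewrite /specnorm => /set0P /negP; rewrite negbK => /eqP ->; rewrite sup0.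
Qed.

(* For p = 0 the unit sphere is empty and [sup] returns the junk value 0. *)
Lemma specnorm_le m p (A : 'M[C]_(m, p)) (c : R) : (0 < p)%N ->
  (forall x, cvnorm (A *m x) <= c * cvnorm x) -> specnorm A <= c.
Proof.
move=> p_gt0 le_Ac; apply: ge_sup => [|_ [x x1 <-]]; last by rewrite -[c]mulr1 -x1.
pose e : 'cV[C]_p := delta_mx (Ordinal p_gt0) 0.
have e_neq0 : e != 0.
  by apply/eqP => /matrixP /(_ (Ordinal p_gt0) 0) /eqP; rewrite !mxE !eqxx oner_eq0.
by exists (cvnorm (A *m ((cvnorm e)^-1%:C *: e))), ((cvnorm e)^-1%:C *: e);
  first exact: cvnorm_normalize.
Qed.

Lemma cvnorm_mulmx_le_specnorm_embed m p (U : 'M[R]_(m, p)) (B : 'M[C]_p) x :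
  U^T *m U = 1%:M ->
  cvnorm (B *m x) <= specnorm (toCmx U *m B *m (toCmx U)^T) * cvnorm x.
Proof.
move=> U_iso; rewrite -(cvnorm_isometry U_iso) -[cvnorm x](cvnorm_isometry U_iso).
have -> : toCmx U *m (B *m x) = toCmx U *m B *m (toCmx U)^T *m (toCmx U *m x).
  by rewrite -!mulmxA (mulmxA (toCmx U)^T) toCmx_isometry // mul1mx.
exact: cvnorm_mulmx_le.
Qed.

Lemma cvnorm_diag_mx_le n (d : 'I_n -> C) (x : 'cV[C]_n) :
  cvnorm (diag_mx (\row_i d i) *m x) <= \big[Num.max/0]_i cabs (d i) * cvnorm x.
Proof.
have max_ge0 : 0 <= \big[Num.max/0]_i cabs (d i) by exact: bigmax_ge_id.
rewrite -(ger0_norm max_ge0) -cabs_real -cvnormZ; apply: cvnorm_le => i.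
rewrite mul_diag_mx !mxE !cabsM cabs_real ger0_norm // ler_wpM2r ?cabs_ge0 //.
exact: (le_bigmax _ (fun i => cabs (d i))).
Qed.

End SpectralNorm.

Section LaplacianEigen.
Variables (R : realType) (n : nat).

Lemma laplacian_sym (L : 'M[R]_n) : is_graph_laplacian L -> L^T = L.
Proof.
move=> [W [W_sym _ _ ->]]; apply/matrixP => i j; rewrite !mxE.
have [->|_] := eqVneq i j; first by [].
by rewrite !mul0r -[W i j](congr1 (fun M : 'M[R]_n => M i j) W_sym) mxE.
Qed.

Lemma firstcols_isometry k (hk : (k <= n)%N) (V : 'M[R]_n) :
  V^T *m V = 1%:M -> (firstcols hk V)^T *m firstcols hk V = 1%:M.
Proof.
move=> V_orth; apply/matrixP => i j.
have := congr1 (fun M : 'M[R]_n => M (widen_ord hk i) (widen_ord hk j)) V_orth.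
have widen_eq : (widen_ord hk i == widen_ord hk j) = (i == j).
  by apply/eqP/eqP => [/(congr1 val) /= /val_inj | ->].
by rewrite /= !mxE widen_eq => <-; apply: eq_bigr => l _; rewrite !mxE.
Qed.

Section Eigenvectors.
Variables (L : 'M[R]_n) (lam : 'I_n -> R) (V : 'M[R]_n).
Hypothesis V_eigen : forall i, L *m col i V = lam i *: col i V.

Lemma mulmx_eigenE i j : (L *m V) i j = lam j * V i j.
Proof.
have := congr1 (fun v : 'cV[R]_n => v i 0) (V_eigen j).
by rewrite /= !mxE => <-; apply: eq_bigr => l _; rewrite !mxE.
Qed.

Lemma mulmx_eigen : L *m V = V *m diag_mx (\row_j lam j).
Proof. by apply/matrixP => i j; rewrite mul_mx_diag mulmx_eigenE !mxE mulrC. Qed.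

Lemma cvnorm_eigen_tail_ge (k : 'I_n) :
  V^T *m V = 1%:M -> (forall i j : 'I_n, (i <= j)%N -> lam i <= lam j) ->
  0 <= lam k -> forall x : 'cV[R[i]]_n, (toCmx (firstcols (ltnW (ltn_ord k)) V))^T *m x = 0 ->
  lam k * cvnorm x <= cvnorm (toCmx L *m x).
Proof.
move=> V_orth lam_mono lamk_ge0 x x_tail; set c := (toCmx V)^T *m x.
have V_orth' : V *m V^T = 1%:M := mulmx1C V_orth.
have xE : x = toCmx V *m c by rewrite mulmxA toCmx_tr -toCmxM V_orth' toCmx1 mul1mx.
have LxE : toCmx L *m x = toCmx V *m (toCmx (diag_mx (\row_j lam j)) *m c).
  by rewrite {1}xE mulmxA -toCmxM mulmx_eigen toCmxM mulmxA.
have c_head (i : 'I_n) : (i < k)%N -> c i 0 = 0.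
  move=> lt_ik; have := congr1 (fun v : 'cV[R[i]]_k => v (Ordinal lt_ik) 0) x_tail.
  rewrite /c !mxE => tail0; apply: etrans tail0; apply: eq_bigr => l _; rewrite !mxE.
  by congr (_ * _); congr (_%:C); congr (V _ _); apply: val_inj.
clearbody c; rewrite LxE cvnorm_isometry // {1}xE cvnorm_isometry //.
rewrite -(ger0_norm lamk_ge0) -cabs_real -cvnormZ; apply: cvnorm_le => i.
rewrite /toCmx map_diag_mx mul_diag_mx !mxE !cabsM cabs_real ger0_norm //.
have [/c_head ->|le_ki] := ltnP i k; first by rewrite cabs0 !mulr0.
rewrite ler_wpM2r ?cabs_ge0 // cabs_real ger0_norm ?lam_mono //.
exact: le_trans lamk_ge0 (lam_mono _ _ le_ki).
Qed.

Variables (k : nat) (hk : (k <= n)%N).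
Let Lamk := diag_mx (\row_(j < k) lam (widen_ord hk j)).

Lemma mulmx_firstcols_eigen : L *m firstcols hk V = firstcols hk V *m Lamk.
Proof.
apply/matrixP => i j; rewrite mul_mx_diag !mxE mulrC -mulmx_eigenE !mxE.
by apply: eq_bigr => l _; rewrite !mxE.
Qed.

Lemma tr_firstcols_mulmx_eigen :
  L^T = L -> (firstcols hk V)^T *m L = Lamk *m (firstcols hk V)^T.
Proof.
by move=> L_sym; rewrite -{1}L_sym -trmx_mul mulmx_firstcols_eigen trmx_mul tr_diag_mx.
Qed.

End Eigenvectors.

End LaplacianEigen.

Section Deflation.
Variables (R : realType) (n k : nat) (Vr : 'M[R]_(n, k)).
Variables (H Lc : 'M[R[i]]_n) (Lk : 'M[R[i]]_k) (f : R[i]) (M1 M2 lamk : R).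
Local Notation Vc := (toCmx Vr).
Local Notation P := (1%:M - Vc *m Vc^T).
Local Notation A := (Vc^T *m H *m Vc + f *: Lk).
Local Notation N := (H + f *: Lc).
Local Notation den := (cabs f * lamk - M2 - M1 * M2 ^+ 2).

Hypothesis Vr_isometry : Vr^T *m Vr = 1%:M.
Hypothesis Lc_Vc : Lc *m Vc = Vc *m Lk.
Hypothesis Vc_Lc : Vc^T *m Lc = Lk *m Vc^T.
Hypothesis H_bound : forall x, cvnorm (H *m x) <= M2 * cvnorm x.
Hypothesis A_unit : A \in unitmx.
Hypothesis invA_bound : forall u, cvnorm (invmx A *m u) <= M1 * cvnorm u.
Hypothesis Lc_tail_ge : forall x, Vc^T *m x = 0 -> lamk * cvnorm x <= cvnorm (Lc *m x).
Hypotheses (M1_ge0 : 0 <= M1) (M2_ge0 : 0 <= M2) (den_gt0 : 0 < den).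

Lemma proj_complE (v : 'cV[R[i]]_n) : P *m v = v - Vc *m (Vc^T *m v).
Proof. by rewrite mulmxBl mul1mx mulmxA. Qed.

Lemma proj_compl_mulmx_Vc : P *m Vc = 0.
Proof. by rewrite mulmxBl mul1mx -mulmxA toCmx_isometry // mulmx1 subrr. Qed.

Lemma deflation_head_bound e : Vc^T *m (N *m e) = 0 ->
  cvnorm e <= (M1 * M2 + 1) * cvnorm (P *m e).
Proof.
move=> Ne_tail; set a := Vc^T *m e; set e2 := P *m e.
have eE : e = Vc *m a + e2 by rewrite /e2 proj_complE addrC subrK.
have Aa : A *m a + Vc^T *m (H *m e2) = 0.
  rewrite -Ne_tail !mulmxDl mulmxDr -!scalemxAl -scalemxAr.
  rewrite (mulmxA _ Lc) Vc_Lc -(mulmxA Lk) -/a [in RHS]eE !mulmxDr !mulmxA.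
  by rewrite addrAC.
have a_bound : cvnorm a <= M1 * (M2 * cvnorm e2).
  move/eqP: Aa; rewrite addr_eq0 => /eqP Aa.
  rewrite -[a](mulKmx A_unit) Aa mulmxN cvnormN.
  apply: le_trans (invA_bound _) (ler_wpM2l M1_ge0 _).
  exact: le_trans (cvnorm_proj_le Vr_isometry _) (H_bound _).
rewrite {1}eE; apply: le_trans (cvnormD _ _) _.
by rewrite cvnorm_isometry // mulrDl mul1r -mulrA lerD2r.
Qed.

Lemma deflation_tail_bound e : Vc^T *m (N *m e) = 0 ->
  den * cvnorm (P *m e) <= cvnorm (P *m (N *m e)).
Proof.
move=> Ne_tail; set e2 := P *m e.
have Lc_e2 : Lc *m e2 = P *m (Lc *m e).
  by rewrite /e2 !proj_complE mulmxBr (mulmxA Vc^T) Vc_Lc (mulmxA Lc) Lc_Vc !mulmxA.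
have fLc_e2 : f *: (Lc *m e2) = P *m (N *m e) - P *m (H *m e).
  by rewrite Lc_e2 (mulmxDl H) -scalemxAl mulmxDr -scalemxAr addrAC subrr add0r.
have le_fLc : cabs f * cvnorm (Lc *m e2) <= cvnorm (P *m (N *m e)) + M2 * cvnorm e.
  rewrite -cvnormZ fLc_e2; apply: le_trans (cvnormB _ _) (lerD (lexx _) _).
  exact: le_trans (cvnorm_proj_compl_le Vr_isometry _) (H_bound _).
have le_tail : cabs f * (lamk * cvnorm e2) <= cabs f * cvnorm (Lc *m e2).
  by rewrite ler_wpM2l ?cabs_ge0 ?Lc_tail_ge ?isometry_proj_complE.
have le_head : M2 * cvnorm e <= M2 * ((M1 * M2 + 1) * cvnorm e2).
  by rewrite ler_wpM2l ?deflation_head_bound.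
have -> : den * cvnorm e2 =
    cabs f * (lamk * cvnorm e2) - M2 * ((M1 * M2 + 1) * cvnorm e2) by ring.
rewrite lerBlDr; apply: le_trans le_tail _; apply: le_trans le_fLc _.
exact: lerD (lexx _) le_head.
Qed.

Lemma deflation_bound e : Vc^T *m (N *m e) = 0 ->
  den * cvnorm e <= (M1 * M2 + 1) * cvnorm (P *m (N *m e)).
Proof.
move=> Ne_tail; apply: le_trans (ler_wpM2l (ltW den_gt0) (deflation_head_bound Ne_tail)) _.
rewrite mulrCA ler_wpM2l ?deflation_tail_bound //.
by rewrite addr_ge0 ?mulr_ge0.
Qed.

Lemma deflation_unitmx : N \in unitmx.
Proof.
rewrite unitmxE unitfE -det_tr; apply/negP => /det0P [v v_neq0 vN0].
have Nv0 : N *m v^T = 0 by rewrite -[N]trmxK -trmx_mul vN0 trmx0.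
have := deflation_bound (e := v^T); rewrite Nv0 !mulmx0 cvnorm0 mulr0 => /(_ erefl).
rewrite pmulr_rle0 // => v_le0; move: v_neq0.
suff /(congr1 trmx) : v^T = 0 by rewrite trmxK trmx0 => ->; rewrite eqxx.
by apply: cvnorm_eq0; apply/eqP; rewrite eq_le v_le0 cvnorm_ge0.
Qed.

Lemma deflation_error_bound x y : N *m x = y ->
  den * cvnorm (x - Vc *m invmx A *m Vc^T *m y) <= (M1 * M2 + 1) ^+ 2 * cvnorm y.
Proof.
move=> Nx; set w := invmx A *m (Vc^T *m y).
have -> : Vc *m invmx A *m Vc^T *m y = Vc *m w by rewrite !mulmxA.
have VcNVc : Vc^T *m N *m Vc = A.
  by rewrite mulmxDr mulmxDl -scalemxAr -scalemxAl Vc_Lc -(mulmxA Lk) toCmx_isometry ?mulmx1.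
have Ne_tail : Vc^T *m (N *m (x - Vc *m w)) = 0.
  by rewrite mulmxBr Nx mulmxBr !mulmxA VcNVc mulmxV // mul1mx subrr.
have PNVc : P *m N *m Vc = P *m H *m Vc.
  rewrite mulmxDr (mulmxDl (P *m H)) -scalemxAr -scalemxAl -(mulmxA P Lc) Lc_Vc.
  by rewrite (mulmxA P Vc) proj_compl_mulmx_Vc mul0mx scaler0 addr0.
have PNe : P *m (N *m (x - Vc *m w)) = P *m (y - H *m (Vc *m w)).
  by rewrite mulmxBr Nx !mulmxBr !mulmxA PNVc.
have w_bound : cvnorm w <= M1 * cvnorm y.
  exact: le_trans (invA_bound _) (ler_wpM2l M1_ge0 (cvnorm_proj_le Vr_isometry _)).
have PNe_bound : cvnorm (P *m (N *m (x - Vc *m w))) <= (M1 * M2 + 1) * cvnorm y.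
  rewrite PNe; apply: le_trans (cvnorm_proj_compl_le Vr_isometry _) _.
  apply: le_trans (cvnormB _ _) _; rewrite mulrDl mul1r addrC lerD2r.
  apply: le_trans (H_bound _) _.
  by rewrite cvnorm_isometry // [M1 * M2]mulrC -mulrA ler_wpM2l.
apply: le_trans (deflation_bound Ne_tail) _.
by rewrite expr2 -mulrA ler_wpM2l ?addr_ge0 ?mulr_ge0.
Qed.

End Deflation.

Lemma diag_mx_mulV (F : fieldType) n (d : 'I_n -> F) : (forall i, d i != 0) ->
  diag_mx (\row_i d i) *m diag_mx (\row_i (d i)^-1) = 1%:M.
Proof. by move=> d_neq0; rewrite mulmx_diag; apply/matrixP => i j; rewrite !mxE mulfV. Qed.

Theorem theorem1 (R : realType) (n : nat) (k : 'I_n)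
    (L : 'M[R]_n) (lam : 'I_n -> R) (V : 'M[R]_n)
    (g : 'I_n -> R[i] -> R[i]) (f : R[i] -> R[i]) (s0 : R[i]) :
  (2 <= n)%N -> (1 <= k)%N ->
  is_graph_laplacian L ->
  ordered_eigendecomp L lam V ->
  (* M_2 finite: every g_i(s0) is invertible *)
  (forall i, g i s0 != 0) ->
  let G := diag_mx (\row_i g i s0) in
  let Ginv := diag_mx (\row_i (g i s0)^-1) in
  let fs := f s0 in
  let Vk := toCmx (firstcols (ltnW (ltn_ord k)) V) in
  let Lamk := toCmx (diag_mx (\row_(j < k) lam (widen_ord (ltnW (ltn_ord k)) j))) in
  let Ak := Vk^T *m Ginv *m Vk + fs *: Lamk in
  (* M_1 finite: the inner inverse in T_k(s0) exists *)
  Ak \in unitmx ->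
  let Tk := Vk *m invmx Ak *m Vk^T in
  let Tyu := invmx (1%:M + fs *: (G *m toCmx L)) *m G in
  let M1 := specnorm Tk in
  let M2 := \big[Num.max/0]_(i < n) cabs ((g i s0)^-1) in
  cabs fs * lam k > M2 + M1 * M2 ^+ 2 ->
  (1%:M + fs *: (G *m toCmx L)) \in unitmx /\
  specnorm (Tyu - Tk) <= (M1 * M2 + 1) ^+ 2 / (cabs fs * lam k - M2 - M1 * M2 ^+ 2).
Proof.
move=> n_ge2 _ L_lap [lam_mono V_orth V_eigen] g_neq0 G Ginv fs Vk Lamk Ak Ak_unit
  Tk Tyu M1 M2 gap.
have Vk_iso := firstcols_isometry (ltnW (ltn_ord k)) V_orth.
have LVk : toCmx L *m Vk = Vk *m Lamk by rewrite -!toCmxM (mulmx_firstcols_eigen V_eigen).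
have VkL : Vk^T *m toCmx L = Lamk *m Vk^T.
  by rewrite !toCmx_tr -!toCmxM (tr_firstcols_mulmx_eigen V_eigen) ?laplacian_sym.
have Ginv_bound := cvnorm_diag_mx_le (fun i => (g i s0)^-1).
have invAk_bound u := cvnorm_mulmx_le_specnorm_embed (invmx Ak) u Vk_iso.
have M1_ge0 : 0 <= M1 := specnorm_ge0 Tk.
have M2_ge0 : 0 <= M2 := bigmax_ge_id _ _ _ _.
have lamk_gt0 : 0 < lam k by have := cabs_ge0 fs; nra.
have L_tail := cvnorm_eigen_tail_ge V_eigen V_orth lam_mono (ltW lamk_gt0).
have den_gt0 : 0 < cabs fs * lam k - M2 - M1 * M2 ^+ 2 by lra.
have N_unit := deflation_unitmx Vk_iso LVk VkL Ginv_bound Ak_unit invAk_bound L_tail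
  M1_ge0 M2_ge0 den_gt0.
have G_unit := proj1 (mulmx1_unit (diag_mx_mulV g_neq0)).
have GN : 1%:M + fs *: (G *m toCmx L) = G *m (Ginv + fs *: toCmx L).
  by rewrite mulmxDr diag_mx_mulV // scalemxAr.
split; first by rewrite GN unitmx_mul G_unit N_unit.
apply: specnorm_le (ltnW n_ge2) _ => y; rewrite mulrAC ler_pdivlMr // mulrC mulmxBl.
apply: deflation_error_bound Vk_iso LVk VkL Ginv_bound Ak_unit invAk_bound L_tail
  M1_ge0 M2_ge0 den_gt0 _ _ _.
rewrite /Tyu GN -[LHS](mulKmx G_unit) !mulmxA -!(mulmxA (invmx G)).
by rewrite mulmxV ?unitmx_mul ?G_unit // mul1mx mulKmx.
Qed.
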